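(* Let $I$ be an integral on $R$. Then $\mu_I$, given by $\mu_I(D(a)):=\sup_{n\in\mathbb{N}}I(na^+\wedge1)$, is well defined on $\mathrm{Spec}(R)$ (if $D(a)=D(b)$ in $\mathrm{Spec}(R)$ then the two suprema coincide) and is a valuation on $\mathrm{Spec}(R)$.
   Context: $R$ is a Riesz space over $\mathbb{Q}$ with strong unit $1$; $a^+=a\vee0$; rationals are identified with multiples of $1$. $\mathrm{Spec}(R)$ is the distributive lattice generated by symbols $D(a)$, $a\in R$, subject to $D(1)=1$; $D(a)\wedge D(-a)=0$; $D(a+b)\le D(a)\vee D(b)$; $D(a)=0$ if $a\le0$; $D(a\vee b)=D(a)\vee D(b)$; every element is of the form $D(a)$, and $D(a)\le D(b)$ iff $a^+\le nb^+$ for some $n$. An integral is a positive linear map $I:R\to\mathbb{R}$ (Dedekind reals) with $I(1)=1$. The supremum of a set of reals is taken as a lower real (lower reals: inhabited, downward closed, rounded sets of rationals). A valuation is a map $\mu$ from $\mathrm{Spec}(R)$ to nonnegative lower reals with $\mu(0)=0$, $\mu(1)=1$, $\mu(x)+\mu(y)=\mu(x\vee y)+\mu(x\wedge y)$, monotone, and $\mu(D(a))\le\bigvee_{\varepsilon>0,\varepsilon\in\mathbb{Q}}\mu(D(a-\varepsilon))$. *)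

From Stdlib Require Import QArith Reals.
From Stdlib Require Import Qreals.

Open Scope Q_scope.

Record Riesz := {
  car :> Type;
  zero : car;
  add : car -> car -> car;
  opp : car -> car;
  smul : Q -> car -> car;
  le : car -> car -> Prop;
  join : car -> car -> car;
  meet : car -> car -> car;
  one : car;
  addA : forall x y z, add x (add y z) = add (add x y) z;
  addC : forall x y, add x y = add y x;
  add0 : forall x, add zero x = x;
  addN : forall x, add (opp x) x = zero;
  smul_Qeq : forall p q x, p == q -> smul p x = smul q x;
  smul1 : forall x, smul 1 x = x;
  smulA : forall p q x, smul p (smul q x) = smul (p * q) x;
  smulDr : forall q x y, smul q (add x y) = add (smul q x) (smul q y);
  smulDl : forall p q x, smul (p + q) x = add (smul p x) (smul q x);
  le_refl : forall x, le x x;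
  le_antisym : forall x y, le x y -> le y x -> x = y;
  le_trans : forall x y z, le x y -> le y z -> le x z;
  le_add : forall x y z, le x y -> le (add x z) (add y z);
  le_smul : forall q x y, 0 <= q -> le x y -> le (smul q x) (smul q y);
  join_l : forall x y, le x (join x y);
  join_r : forall x y, le y (join x y);
  join_lub : forall x y z, le x z -> le y z -> le (join x y) z;
  meet_l : forall x y, le (meet x y) x;
  meet_r : forall x y, le (meet x y) y;
  meet_glb : forall x y z, le z x -> le z y -> le z (meet x y);
  one_pos : le zero one;
  one_strong : forall a, exists n : nat, le a (smul (inject_Z (Z.of_nat n)) one)
}.

Arguments zero {r}. Arguments add {r}. Arguments opp {r}. Arguments smul {r}.
Arguments le {r}. Arguments join {r}. Arguments meet {r}. Arguments one {r}.

Section RieszDefs.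
Variable A : Riesz.

Definition pos (a : A) : A := join a zero.
Definition nmul (n : nat) (a : A) : A := smul (inject_Z (Z.of_nat n)) a.
(** the rational [q] identified with [q * 1] *)
Definition qc (q : Q) : A := smul q one.
Definition sub (a b : A) : A := add a (opp b).

(** Order on Spec(R): D(a) <= D(b) iff a^+ <= n b^+ for some n
    (every element of Spec(R) is of the form D(a)). *)
Definition spec_le (a b : A) : Prop := exists n : nat, le (pos a) (nmul n (pos b)).
Definition spec_eq (a b : A) : Prop := spec_le a b /\ spec_le b a.
(** D(j) = D(a) \/ D(b) and D(m) = D(a) /\ D(b) in Spec(R) *)
Definition spec_is_join (a b j : A) : Prop :=
  spec_le a j /\ spec_le b j /\ forall c, spec_le a c -> spec_le b c -> spec_le j c.
Definition spec_is_meet (a b m : A) : Prop :=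
  spec_le m a /\ spec_le m b /\ forall c, spec_le c a -> spec_le c b -> spec_le c m.

Definition is_integral (I : A -> R) : Prop :=
  (forall x y, I (add x y) = (I x + I y)%R) /\
  (forall q x, I (smul q x) = (Q2R q * I x)%R) /\
  (forall x, le zero x -> (0 <= I x)%R) /\
  I one = 1%R.
End RieszDefs.

(** Lower reals: inhabited, downward closed, rounded sets of rationals. *)
Definition lreal := Q -> Prop.
Definition is_lreal (x : lreal) : Prop :=
  (exists q, x q) /\
  (forall p q, p <= q -> x q -> x p) /\
  (forall q, x q -> exists p, q < p /\ x p).
Definition lr_of_Q (r : Q) : lreal := fun q => q < r.
Definition lr_le (x y : lreal) : Prop := forall q, x q -> y q.
Definition lr_eq (x y : lreal) : Prop := forall q, x q <-> y q.
Definition lr_add (x y : lreal) : lreal :=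
  fun r => exists p q, x p /\ y q /\ r <= p + q.
Definition lr_nonneg (x : lreal) : Prop := lr_le (lr_of_Q 0) x.

(** Supremum of a family of reals, as a lower real. *)
Definition sup_nat_R (f : nat -> R) : lreal := fun q => exists n, (Q2R q < f n)%R.

(** mu_I(D(a)) := sup_n I(n a^+ /\ 1), computed on a representative a. *)
Definition mu_I (A : Riesz) (I : A -> R) (a : A) : lreal :=
  sup_nat_R (fun n => I (meet (nmul A n (pos A a)) one)).

Definition spec_well_defined (A : Riesz) (m : A -> lreal) : Prop :=
  forall a b, spec_eq A a b -> lr_eq (m a) (m b).

(** Valuation on Spec(R), given by its values on representatives D(a). *)
Definition is_valuation (A : Riesz) (m : A -> lreal) : Prop :=
  (forall a, is_lreal (m a) /\ lr_nonneg (m a)) /\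
  lr_eq (m zero) (lr_of_Q 0) /\
  lr_eq (m one) (lr_of_Q 1) /\
  (forall a b j k, spec_is_join A a b j -> spec_is_meet A a b k ->
     lr_eq (lr_add (m a) (m b)) (lr_add (m j) (m k))) /\
  (forall a b, spec_le A a b -> lr_le (m a) (m b)) /\
  (forall a, lr_le (m a)
     (fun q => exists eps : Q, 0 < eps /\ m (sub A a (qc A eps)) q)).

From Pilot Require Import Defs.
From Stdlib Require Import QArith Reals Qreals ZArith Lra Lia.

(** Let I be an integral on a Riesz space R with strong unit 1 and put
  f_a(n) := I(n a^+ /\ 1), so that mu_I(D(a)) = sup_n f_a(n).
  - f_a is increasing with values in [0,1]; if D(a) <= D(b), i.e.
    a^+ <= k b^+, then f_a(n) <= f_b(nk).  This gives monotonicity of mu_I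
    and hence its well-definedness on Spec(R).
  - In Spec(R), D(a) \/ D(b) = D(a^+ \/ b^+) and D(a) /\ D(b) = D(a^+ /\ b^+).
    The identity (x \/ y) /\ 1 + (x /\ y) /\ 1 = x /\ 1 + y /\ 1, a consequence
    of the distributivity of Riesz spaces, makes f_a + f_b and
    f_(a^+ \/ b^+) + f_(a^+ /\ b^+) agree pointwise; since suprema of
    increasing sequences add, mu_I is modular.
  - From n a^+ /\ 1 <= (n (a - eps)^+ /\ 1) + n eps we get
    f_a(n) <= f_(a - eps)(n) + n eps, which yields the continuity axiom. *)

Arguments addA {r}. Arguments addC {r}. Arguments add0 {r}. Arguments addN {r}.
Arguments smul_Qeq {r}. Arguments smul1 {r}. Arguments smulA {r}.
Arguments smulDr {r}. Arguments smulDl {r}.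
Arguments le_refl {r}. Arguments le_antisym {r}. Arguments le_trans {r}.
Arguments le_add {r}. Arguments le_smul {r}.
Arguments join_l {r}. Arguments join_r {r}. Arguments join_lub {r}.
Arguments meet_l {r}. Arguments meet_r {r}. Arguments meet_glb {r}.
Arguments one_pos {r}.

Section RieszAlgebra.
Context {A : Riesz}.
Implicit Types x y z u v t : car A.

Lemma add_0_r x : add x zero = x.
Proof. rewrite addC; apply add0. Qed.

Lemma add_opp_r x : add x (opp x) = zero.
Proof. rewrite addC; apply addN. Qed.

Lemma add_opp_cancel x y : add (add x y) (opp y) = x.
Proof. rewrite <- addA, add_opp_r; apply add_0_r. Qed.

Lemma add_cancel_l z x y : add z x = add z y -> x = y.
Proof.
  intro E. rewrite <- (add_opp_cancel x z), <- (add_opp_cancel y z).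
  rewrite (addC x z), (addC y z), E; reflexivity.
Qed.

Lemma le_add_l z x y : le x y -> le (add z x) (add z y).
Proof. intro H. rewrite (addC z x), (addC z y). now apply le_add. Qed.

Lemma le_add2 x y u v : le x y -> le u v -> le (add x u) (add y v).
Proof. intros H1 H2. apply (le_trans _ (add y u)); [now apply le_add | now apply le_add_l]. Qed.

Lemma le_add_cancel x y z : le (add x z) (add y z) -> le x y.
Proof.
  intro H. apply (le_add _ _ (opp z)) in H. now rewrite !add_opp_cancel in H.
Qed.

Lemma le_opp x y : le x y -> le (opp y) (opp x).
Proof.
  intro H. apply (le_add_cancel _ _ (add x y)).
  rewrite !addA, addN, add0, (addC (opp y) x), <- addA, addN, add_0_r. exact H.
Qed.

Lemma opp_involutive x : opp (opp x) = x.
Proof. apply (add_cancel_l (opp x)). rewrite add_opp_r, addN. reflexivity. Qed.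

Lemma smul_0_l x : smul 0 x = zero.
Proof.
  apply (add_cancel_l (smul 0 x)). rewrite add_0_r, <- smulDl.
  apply smul_Qeq. reflexivity.
Qed.

Lemma smul_0_r q : smul q (@zero A) = zero.
Proof. apply (add_cancel_l (smul q zero)). rewrite add_0_r, <- smulDr, add0. reflexivity. Qed.

Lemma smul_nonneg q x : 0 <= q -> le zero x -> le zero (smul q x).
Proof. intros Hq H. rewrite <- (smul_0_r q). now apply le_smul. Qed.

Lemma smul_inv_l q x : ~ q == 0 -> smul (/ q) (smul q x) = x.
Proof.
  intro Hq. rewrite smulA, (smul_Qeq _ 1), smul1; [reflexivity|].
  rewrite Qmult_comm; now apply Qmult_inv_r.
Qed.

Lemma smul_inv_r q x : ~ q == 0 -> smul q (smul (/ q) x) = x.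
Proof.
  intro Hq. rewrite smulA, (smul_Qeq _ 1), smul1; [reflexivity|]. now apply Qmult_inv_r.
Qed.

Lemma meet_of_le x y : le x y -> meet x y = x.
Proof. intro H. apply le_antisym; [apply meet_l | apply meet_glb; auto using le_refl]. Qed.

Lemma join_of_le x y : le y x -> join x y = x.
Proof. intro H. apply le_antisym; [apply join_lub; auto using le_refl | apply join_l]. Qed.

Lemma meetC x y : meet x y = meet y x.
Proof. apply le_antisym; apply meet_glb; auto using meet_l, meet_r. Qed.

Lemma meet_mono x y u v : le x u -> le y v -> le (meet x y) (meet u v).
Proof.
  intros H1 H2. apply meet_glb.
  - exact (le_trans _ _ _ (meet_l x y) H1).
  - exact (le_trans _ _ _ (meet_r x y) H2).
Qed.

Lemma join_mono x y u v : le x u -> le y v -> le (join x y) (join u v).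
Proof.
  intros H1 H2. apply join_lub.
  - exact (le_trans _ _ _ H1 (join_l u v)).
  - exact (le_trans _ _ _ H2 (join_r u v)).
Qed.

Lemma meet_meet_l x y z : le (meet (meet x y) z) y.
Proof. exact (le_trans _ _ _ (meet_l _ _) (meet_r _ _)). Qed.

Lemma meet_meet_r x y z : le (meet x (meet y z)) y.
Proof. exact (le_trans _ _ _ (meet_r _ _) (meet_l _ _)). Qed.

Lemma meet_add x y z : add (meet x y) z = meet (add x z) (add y z).
Proof.
  apply le_antisym.
  - apply meet_glb; apply le_add; [apply meet_l | apply meet_r].
  - apply (le_add_cancel _ _ (opp z)). rewrite add_opp_cancel.
    apply meet_glb.
    + rewrite <- (add_opp_cancel x z) at 2. apply le_add, meet_l.
    + rewrite <- (add_opp_cancel y z) at 2. apply le_add, meet_r.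
Qed.

Lemma opp_join x y : opp (join x y) = meet (opp x) (opp y).
Proof.
  apply le_antisym.
  - apply meet_glb; apply le_opp; [apply join_l | apply join_r].
  - rewrite <- (opp_involutive (meet _ _)). apply le_opp. apply join_lub.
    + rewrite <- (opp_involutive x) at 1. apply le_opp, meet_l.
    + rewrite <- (opp_involutive y) at 1. apply le_opp, meet_r.
Qed.

Lemma join_add_meet x y : add (join x y) (meet x y) = add x y.
Proof.
  assert (E : add (add x y) (opp (join x y)) = meet x y).
  { rewrite opp_join, addC, meet_add, (addA (opp x)), addN, add0.
    rewrite (addC x y), (addA (opp y)), addN, add0. apply meetC. }
  rewrite <- E, (addC (add x y)), addA, add_opp_r, add0. reflexivity.
Qed.

(** With [u = t/\b], [v = t/\c] one has [u \/ v = u + v - t/\b/\c], and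
    [t + t/\(b/\c) <= u + v] is checked on the four terms of [u + v]. *)
Lemma le_join_meets t b c : le t (join b c) -> le t (join (meet t b) (meet t c)).
Proof.
  intro H. set (u := meet t b). set (v := meet t c).
  assert (Euv : meet u v = meet t (meet b c)).
  { apply le_antisym; repeat apply meet_glb; unfold u, v;
      eauto using meet_l, meet_r, meet_meet_l, meet_meet_r, le_trans. }
  apply (le_add_cancel _ _ (meet u v)). rewrite join_add_meet, Euv.
  unfold u, v. rewrite (meet_add t b), (addC t (meet t c)), (addC b (meet t c)), !meet_add.
  rewrite (addC t (meet t (meet b c))), meet_add.
  assert (Hbc : le (add (meet b c) t) (add c b)).
  { rewrite addC, (addC c b), <- (join_add_meet b c). apply le_add; exact H. }
  apply meet_glb; apply meet_glb.
  - apply meet_l.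
  - apply (le_trans _ _ _ (meet_r _ _)). apply le_add, meet_r.
  - apply (le_trans _ _ _ (meet_r _ _)). rewrite (addC t b). apply le_add, meet_l.
  - apply (le_trans _ _ _ (meet_r _ _)). exact Hbc.
Qed.

Lemma meet_join_distr t b c : meet t (join b c) = join (meet t b) (meet t c).
Proof.
  apply le_antisym.
  - apply (le_trans _ _ _ (le_join_meets _ _ _ (meet_r t (join b c)))).
    apply join_mono; apply meet_mono; auto using meet_l, le_refl.
  - apply join_lub; apply meet_mono; auto using le_refl, join_l, join_r.
Qed.

Lemma truncation_modular x y :
  add (meet (join x y) one) (meet (meet x y) one) = add (meet x one) (meet y one).
Proof.
  rewrite <- (join_add_meet (meet x one) (meet y one)). f_equal.
  - rewrite meetC, meet_join_distr, (meetC one x), (meetC one y). reflexivity.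
  - apply le_antisym; repeat apply meet_glb;
      eauto using meet_l, meet_r, meet_meet_l, meet_meet_r, le_trans.
Qed.

Lemma smul_meet q x y : 0 <= q -> smul q (meet x y) = meet (smul q x) (smul q y).
Proof.
  intro Hq. destruct (Qeq_dec q 0) as [E|E].
  { rewrite !(smul_Qeq q 0 _ E), !smul_0_l. symmetry; apply meet_of_le, le_refl. }
  assert (Hi : 0 <= / q) by (apply Qinv_le_0_compat; exact Hq).
  apply le_antisym.
  - apply meet_glb; apply le_smul; auto using meet_l, meet_r.
  - rewrite <- (smul_inv_r q (meet (smul q x) (smul q y))) by exact E. apply le_smul; [exact Hq|].
    apply meet_glb.
    + rewrite <- (smul_inv_l q x) at 2 by exact E. apply le_smul; auto using meet_l.
    + rewrite <- (smul_inv_l q y) at 2 by exact E. apply le_smul; auto using meet_r.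
Qed.

Lemma smul_join q x y : 0 <= q -> smul q (join x y) = join (smul q x) (smul q y).
Proof.
  intro Hq. destruct (Qeq_dec q 0) as [E|E].
  { rewrite !(smul_Qeq q 0 _ E), !smul_0_l. symmetry; apply join_of_le, le_refl. }
  assert (Hi : 0 <= / q) by (apply Qinv_le_0_compat; exact Hq).
  apply le_antisym.
  - rewrite <- (smul_inv_r q (join (smul q x) (smul q y))) by exact E. apply le_smul; [exact Hq|].
    apply join_lub.
    + rewrite <- (smul_inv_l q x) at 1 by exact E. apply le_smul; auto using join_l.
    + rewrite <- (smul_inv_l q y) at 1 by exact E. apply le_smul; auto using join_r.
  - apply join_lub; apply le_smul; auto using join_l, join_r.
Qed.

Lemma nat_Qnonneg n : 0 <= inject_Z (Z.of_nat n).
Proof. unfold Qle; simpl. lia. Qed.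

Lemma nmul_0 x : nmul A 0 x = zero.
Proof. apply smul_0_l. Qed.

Lemma nmul_1 x : nmul A 1 x = x.
Proof. unfold nmul. rewrite (smul_Qeq _ 1), smul1; reflexivity. Qed.

Lemma nmul_S n x : nmul A (S n) x = add (nmul A n x) x.
Proof.
  unfold nmul. rewrite <- (smul1 x) at 3. rewrite <- smulDl. apply smul_Qeq.
  rewrite Nat2Z.inj_succ. unfold Z.succ. rewrite inject_Z_plus. reflexivity.
Qed.

Lemma nmul_mul n k x : nmul A n (nmul A k x) = nmul A (n * k) x.
Proof.
  unfold nmul. rewrite smulA. apply smul_Qeq.
  rewrite Nat2Z.inj_mul, inject_Z_mult. reflexivity.
Qed.

Lemma nmul_nonneg n x : le zero x -> le zero (nmul A n x).
Proof. intro H. apply smul_nonneg; auto using nat_Qnonneg. Qed.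

Lemma nmul_le n x y : le x y -> le (nmul A n x) (nmul A n y).
Proof. intro H. apply le_smul; auto using nat_Qnonneg. Qed.

Lemma nmul_mono n m x : le zero x -> (n <= m)%nat -> le (nmul A n x) (nmul A m x).
Proof.
  intros H Hnm. induction Hnm as [|m _ IH]; [apply le_refl|].
  rewrite nmul_S. apply (le_trans _ _ _ IH).
  rewrite <- (add_0_r (nmul A m x)) at 1. apply le_add_l. exact H.
Qed.

Lemma pos_nonneg x : le zero (Defs.pos A x).
Proof. apply join_r. Qed.

Lemma pos_of_nonneg x : le zero x -> Defs.pos A x = x.
Proof. apply join_of_le. Qed.

Lemma truncation_shift (a : A) (eps : Q) n : 0 <= eps ->
  le (meet (nmul A n (Defs.pos A a)) one)
     (add (meet (nmul A n (Defs.pos A (sub A a (qc A eps)))) one) (nmul A n (qc A eps))).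
Proof.
  intro He.
  assert (Hc : le zero (qc A eps)) by (apply smul_nonneg; [exact He | apply one_pos]).
  rewrite meet_add. apply meet_mono.
  - unfold nmul. rewrite <- smulDr. apply le_smul; [apply nat_Qnonneg|].
    apply join_lub.
    + apply (le_trans _ (add (sub A a (qc A eps)) (qc A eps))).
      * unfold sub. rewrite <- addA, addN, add_0_r. apply le_refl.
      * apply le_add, join_l.
    + rewrite <- (add0 zero). apply le_add2; [apply pos_nonneg | exact Hc].
  - rewrite <- (add_0_r one) at 1. apply le_add_l, nmul_nonneg, Hc.
Qed.

End RieszAlgebra.

(** * Suprema of real sequences as lower reals *)

Lemma Q_dense (x y : R) : (x < y)%R -> exists q : Q, (x < Q2R q < y)%R.
Proof.
  intro Hxy. set (d := (y - x)%R).
  assert (Hd : (0 < d)%R) by (unfold d; lra).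
  destruct (archimed (/ d)) as [Hz _]. set (z := up (/ d)) in *.
  assert (Hz0 : (0 < IZR z)%R) by (pose proof (Rinv_0_lt_compat d Hd); lra).
  assert (Hdz : (1 < d * IZR z)%R).
  { apply (Rmult_lt_reg_l (/ d)); [now apply Rinv_0_lt_compat|].
    rewrite <- Rmult_assoc, Rinv_l, Rmult_1_l, Rmult_1_r by lra. exact Hz. }
  destruct (archimed (x * IZR z)) as [Hm1 Hm2]. set (m := up (x * IZR z)) in *.
  exists (Qmake m (Z.to_pos z)).
  unfold Q2R; simpl. rewrite Z2Pos.id by (now apply lt_0_IZR).
  split; apply (Rmult_lt_reg_r (IZR z)); auto;
    rewrite Rmult_assoc, Rinv_l, ?Rmult_1_r by lra; unfold d in Hdz; nra.
Qed.

Lemma Q2R_nat (n : nat) : Q2R (inject_Z (Z.of_nat n)) = INR n.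
Proof. unfold Q2R; simpl. rewrite INR_IZR_INZ. lra. Qed.

Lemma lr_eq_sym x y : lr_eq x y -> lr_eq y x.
Proof. intros H r. symmetry; apply H. Qed.

Lemma lr_eq_trans x y z : lr_eq x y -> lr_eq y z -> lr_eq x z.
Proof. intros H1 H2 r. rewrite (H1 r); apply H2. Qed.

Lemma lr_add_eq x y x' y' : lr_eq x x' -> lr_eq y y' -> lr_eq (lr_add x y) (lr_add x' y').
Proof.
  intros H1 H2 r. split; intros (p & q & Hp & Hq & Hr); exists p, q;
    repeat split; try apply H1; try apply H2; assumption.
Qed.

Definition increasing (f : nat -> R) : Prop := forall n m, (n <= m)%nat -> (f n <= f m)%R.

Section Suprema.
Implicit Types f g : nat -> R.

Lemma sup_nat_R_lreal f : (0 <= f 0%nat)%R -> is_lreal (sup_nat_R f) /\ lr_nonneg (sup_nat_R f).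
Proof.
  intro H0. split; [split; [|split]|].
  - exists (-1)%Q, 0%nat. replace (Q2R (-1)) with (-1)%R by (unfold Q2R; simpl; lra). lra.
  - intros p q Hpq [n Hn]. exists n. apply Qle_Rle in Hpq. lra.
  - intros q [n Hn]. destruct (Q_dense (Q2R q) (f n) Hn) as [p Hp].
    exists p. split; [apply Rlt_Qlt; lra | exists n; lra].
  - intros q Hq. exists 0%nat. apply Qlt_Rlt in Hq. rewrite RMicromega.Q2R_0 in Hq. lra.
Qed.

Lemma sup_nat_R_attained f (c : Q) (k : nat) :
  (forall n, f n <= Q2R c)%R -> f k = Q2R c -> lr_eq (sup_nat_R f) (lr_of_Q c).
Proof.
  intros Hle Hk q. unfold sup_nat_R, lr_of_Q. split.
  - intros [n Hn]. apply Rlt_Qlt. specialize (Hle n). lra.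
  - intro Hq. exists k. rewrite Hk. now apply Qlt_Rlt.
Qed.

Lemma sup_nat_R_le f g : (forall n, exists m, f n <= g m)%R -> lr_le (sup_nat_R f) (sup_nat_R g).
Proof. intros H q [n Hn]. destruct (H n) as [m Hm]. exists m. lra. Qed.

Lemma sup_nat_R_ext f g : (forall n, f n = g n) -> lr_eq (sup_nat_R f) (sup_nat_R g).
Proof. intros H q. unfold sup_nat_R. split; intros [n Hn]; exists n; rewrite H in *; exact Hn. Qed.

Lemma sup_nat_R_add f g : increasing f -> increasing g ->
  lr_eq (lr_add (sup_nat_R f) (sup_nat_R g)) (sup_nat_R (fun n => f n + g n)%R).
Proof.
  intros Hf Hg r. split.
  - intros (p & q & [n Hn] & [m Hm] & Hr). exists (Nat.max n m).
    apply Qle_Rle in Hr. rewrite Q2R_plus in Hr.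
    pose proof (Hf n (Nat.max n m) ltac:(lia)). pose proof (Hg m (Nat.max n m) ltac:(lia)). lra.
  - intros [n Hn]. destruct (Q_dense (Q2R r - g n) (f n)) as [p Hp]; [lra|].
    exists p, (r - p). split; [exists n; lra|]. split.
    + exists n. rewrite Q2R_minus. lra.
    + apply Qle_lteq; right; ring.
Qed.

End Suprema.

(** * Joins and meets in Spec(R) *)

Section SpecLattice.
Context {A : Riesz}.
Implicit Types a b c x : car A.

Lemma spec_le_of_le a x : le zero x -> le (Defs.pos A a) x -> spec_le A a x.
Proof. intros Hx H. exists 1%nat. now rewrite nmul_1, (pos_of_nonneg x). Qed.

Lemma spec_le_of_le_mul x c n : le zero x -> le x (nmul A n (Defs.pos A c)) -> spec_le A x c.
Proof. intros Hx H. exists n. now rewrite (pos_of_nonneg x). Qed.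

(** [D(a) \/ D(b) = D(a^+ \/ b^+)] and [D(a) /\ D(b) = D(a^+ /\ b^+)]. *)
Definition spec_join_rep a b : A := join (Defs.pos A a) (Defs.pos A b).
Definition spec_meet_rep a b : A := meet (Defs.pos A a) (Defs.pos A b).

Lemma spec_join_rep_nonneg a b : le zero (spec_join_rep a b).
Proof. exact (le_trans _ _ _ (pos_nonneg a) (join_l _ _)). Qed.

Lemma spec_meet_rep_nonneg a b : le zero (spec_meet_rep a b).
Proof. apply meet_glb; apply pos_nonneg. Qed.

Lemma spec_join_rep_is_join a b : spec_is_join A a b (spec_join_rep a b).
Proof.
  pose proof (spec_join_rep_nonneg a b) as HJ.
  split; [|split].
  - apply spec_le_of_le; [exact HJ | apply join_l].
  - apply spec_le_of_le; [exact HJ | apply join_r].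
  - intros c [n Hn] [m Hm]. apply (spec_le_of_le_mul _ _ (n + m)); [exact HJ|].
    apply join_lub.
    + apply (le_trans _ _ _ Hn). apply nmul_mono; [apply pos_nonneg | lia].
    + apply (le_trans _ _ _ Hm). apply nmul_mono; [apply pos_nonneg | lia].
Qed.

Lemma spec_meet_rep_is_meet a b : spec_is_meet A a b (spec_meet_rep a b).
Proof.
  pose proof (spec_meet_rep_nonneg a b) as HK.
  split; [|split].
  - apply (spec_le_of_le_mul _ _ 1); [exact HK | rewrite nmul_1; apply meet_l].
  - apply (spec_le_of_le_mul _ _ 1); [exact HK | rewrite nmul_1; apply meet_r].
  - intros c [n Hn] [m Hm]. exists (n + m)%nat.
    rewrite (pos_of_nonneg (spec_meet_rep a b)) by exact HK. unfold spec_meet_rep, nmul. rewrite smul_meet by apply nat_Qnonneg. apply meet_glb.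
    + apply (le_trans _ _ _ Hn). apply nmul_mono; [apply pos_nonneg | lia].
    + apply (le_trans _ _ _ Hm). apply nmul_mono; [apply pos_nonneg | lia].
Qed.

Lemma spec_is_join_unique a b j j' :
  spec_is_join A a b j -> spec_is_join A a b j' -> spec_eq A j j'.
Proof. intros (Ha & Hb & Hj) (Ha' & Hb' & Hj'). split; auto. Qed.

Lemma spec_is_meet_unique a b k k' :
  spec_is_meet A a b k -> spec_is_meet A a b k' -> spec_eq A k k'.
Proof. intros (Ha & Hb & Hk) (Ha' & Hb' & Hk'). split; auto. Qed.

End SpecLattice.

(** * Integrals and the truncation sequences [f_a] *)

Section Integral.
Context {A : Riesz} (I : A -> R) (HI : is_integral A I).
Implicit Types a b x y : car A.

Lemma I_add x y : I (add x y) = (I x + I y)%R.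
Proof. apply HI. Qed.

Lemma I_smul q x : I (smul q x) = (Q2R q * I x)%R.
Proof. apply HI. Qed.

Lemma I_one : I one = 1%R.
Proof. apply HI. Qed.

Lemma I_zero : I zero = 0%R.
Proof. pose proof (I_add zero zero) as H. rewrite add0 in H. lra. Qed.

Lemma I_mono x y : le x y -> (I x <= I y)%R.
Proof.
  intro H. assert (H0 : le zero (add y (opp x))) by (rewrite <- (add_opp_r x); now apply le_add).
  destruct HI as (_ & _ & Hpos & _). apply Hpos in H0.
  pose proof (I_add (add y (opp x)) x) as E. rewrite <- addA, addN, add_0_r in E. lra.
Qed.

Definition trunc a (n : nat) : R := I (meet (nmul A n (Defs.pos A a)) one).

Lemma mu_I_trunc a : mu_I A I a = sup_nat_R (trunc a).
Proof. reflexivity. Qed.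

Lemma trunc_increasing a : increasing (trunc a).
Proof.
  intros n m H. apply I_mono, meet_mono; [|apply le_refl].
  apply nmul_mono; [apply pos_nonneg | exact H].
Qed.

Lemma trunc_0 a : trunc a 0 = 0%R.
Proof. unfold trunc. rewrite nmul_0, meet_of_le by apply one_pos. apply I_zero. Qed.

Lemma trunc_le_1 a n : (trunc a n <= 1)%R.
Proof. rewrite <- I_one. apply I_mono, meet_r. Qed.

Lemma trunc_dominated a b : spec_le A a b -> forall n, exists m, (trunc a n <= trunc b m)%R.
Proof.
  intros [k Hk] n. exists (n * k)%nat. apply I_mono, meet_mono; [|apply le_refl].
  rewrite <- nmul_mul. now apply nmul_le.
Qed.

Lemma trunc_modular a b n :
  (trunc a n + trunc b n = trunc (spec_join_rep a b) n + trunc (spec_meet_rep a b) n)%R.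
Proof.
  unfold trunc. rewrite <- !I_add.
  rewrite (pos_of_nonneg (spec_join_rep a b)) by apply spec_join_rep_nonneg.
  rewrite (pos_of_nonneg (spec_meet_rep a b)) by apply spec_meet_rep_nonneg.
  unfold spec_join_rep, spec_meet_rep, nmul.
  rewrite smul_join, smul_meet, truncation_modular by apply nat_Qnonneg. reflexivity.
Qed.

Lemma trunc_shift a (eps : Q) n : 0 <= eps ->
  (trunc a n <= trunc (sub A a (qc A eps)) n + INR n * Q2R eps)%R.
Proof.
  intro He. pose proof (I_mono _ _ (truncation_shift a eps n He)) as H.
  unfold nmul, qc in H. rewrite I_add, !I_smul, I_one, Q2R_nat in H.
  unfold trunc, nmul, qc. lra.
Qed.

End Integral.

(** * The valuation axioms for [mu_I] *)

Section Valuation.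
Context {A : Riesz} (I : A -> R) (HI : is_integral A I).

Lemma mu_mono a b : spec_le A a b -> lr_le (mu_I A I a) (mu_I A I b).
Proof. intro H. rewrite !mu_I_trunc. apply sup_nat_R_le, (trunc_dominated I HI), H. Qed.

Lemma mu_well_defined : spec_well_defined A (mu_I A I).
Proof. intros a b [Hab Hba] q. split; apply mu_mono; assumption. Qed.

Lemma mu_lreal a : is_lreal (mu_I A I a) /\ lr_nonneg (mu_I A I a).
Proof. rewrite mu_I_trunc. apply sup_nat_R_lreal. rewrite (trunc_0 I HI). lra. Qed.

Lemma mu_zero : lr_eq (mu_I A I zero) (lr_of_Q 0).
Proof.
  assert (E : forall n, trunc I zero n = 0%R).
  { intro n. unfold trunc. rewrite (pos_of_nonneg zero) by apply le_refl.
    unfold nmul. rewrite smul_0_r, meet_of_le by apply one_pos. apply (I_zero I HI). }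
  rewrite mu_I_trunc. apply (sup_nat_R_attained _ _ 0); intros; rewrite E, RMicromega.Q2R_0; lra.
Qed.

Lemma mu_one : lr_eq (mu_I A I one) (lr_of_Q 1).
Proof.
  rewrite mu_I_trunc. apply (sup_nat_R_attained _ _ 1); rewrite RMicromega.Q2R_1.
  - apply (trunc_le_1 I HI).
  - unfold trunc. rewrite (pos_of_nonneg one) by apply one_pos.
    rewrite nmul_1, meet_of_le by apply le_refl. apply (I_one I HI).
Qed.

(** Modularity, computed on the representatives [a^+ \/ b^+] and [a^+ /\ b^+]. *)
Lemma mu_modular a b j k : spec_is_join A a b j -> spec_is_meet A a b k ->
  lr_eq (lr_add (mu_I A I a) (mu_I A I b)) (lr_add (mu_I A I j) (mu_I A I k)).
Proof.
  intros Hj Hk.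
  assert (Ej : spec_eq A (spec_join_rep a b) j)
    by exact (spec_is_join_unique _ _ _ _ (spec_join_rep_is_join a b) Hj).
  assert (Ek : spec_eq A (spec_meet_rep a b) k)
    by exact (spec_is_meet_unique _ _ _ _ (spec_meet_rep_is_meet a b) Hk).
  apply lr_eq_trans with (lr_add (mu_I A I (spec_join_rep a b)) (mu_I A I (spec_meet_rep a b))).
  2: { apply lr_add_eq; apply mu_well_defined; assumption. }
  rewrite !mu_I_trunc.
  eapply lr_eq_trans; [apply sup_nat_R_add; apply (trunc_increasing I HI)|].
  eapply lr_eq_trans; [|apply lr_eq_sym, sup_nat_R_add; apply (trunc_increasing I HI)].
  apply sup_nat_R_ext. apply (trunc_modular I HI).
Qed.

(** Continuity: if [q < f_a(n)], choose a rational [eps > 0] with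
    [n eps < f_a(n) - q]; then [q < f_(a - eps)(n)] by [trunc_shift]. *)
Lemma mu_continuous a : lr_le (mu_I A I a)
  (fun q => exists eps : Q, 0 < eps /\ mu_I A I (sub A a (qc A eps)) q).
Proof.
  rewrite mu_I_trunc. intros q [n Hn].
  set (d := (trunc I a n - Q2R q)%R).
  assert (Hd : (0 < d)%R) by (unfold d; lra).
  assert (Hn1 : (0 < INR n + 1)%R) by (pose proof (pos_INR n); lra).
  destruct (Q_dense 0 (d / (INR n + 1))) as [e [He0 Hed]]; [apply Rdiv_lt_0_compat; lra|].
  assert (He : 0 < e) by (apply Rlt_Qlt; rewrite RMicromega.Q2R_0; exact He0).
  assert (Hne : (INR n * Q2R e < d)%R).
  { apply (Rmult_lt_compat_r (INR n + 1)) in Hed; [|exact Hn1].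
    unfold Rdiv in Hed. rewrite Rmult_assoc, Rinv_l, Rmult_1_r in Hed by lra.
    pose proof (pos_INR n). nra. }
  exists e. split; [exact He|]. rewrite mu_I_trunc. exists n.
  pose proof (trunc_shift I HI a e n (Qlt_le_weak _ _ He)). unfold d in Hne. lra.
Qed.

End Valuation.

Theorem mainTheorem4 (A : Riesz) (I : A -> R) (HI : is_integral A I) :
  spec_well_defined A (mu_I A I) /\ is_valuation A (mu_I A I).
Proof.
  split; [exact (mu_well_defined I HI)|].
  split; [exact (mu_lreal I HI)|].
  split; [exact (mu_zero I HI)|].
  split; [exact (mu_one I HI)|].
  split; [exact (mu_modular I HI)|].
  split; [exact (mu_mono I HI)|].
  exact (mu_continuous I HI).
Qed.
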